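(* Let $N,r\in\mathbb N$ and let $\mathsf A\in\mathbb H^{N\times N}$, $\mathsf B\in\mathbb H^{N\times r}$, $\mathsf C\in\mathbb H^{r\times N}$, $\mathsf D\in\mathbb H^{r\times r}$ be such that the matrix $\begin{pmatrix}\mathsf A&\mathsf B\\\mathsf C&\mathsf D\end{pmatrix}\in\mathbb H^{(N+r)\times(N+r)}$ is unitary. Let $B(x)=\mathsf D+\sum_{n\ge1}P_n(x)\mathsf C\mathsf A^{n-1}\mathsf B$, $x\in\mathcal E$. Then the operator $M_B\big(\sum_nP_nu_n\big)=\sum_n(P_n\odot B)u_n$ is an isometry from $(\mathbf H_2(\mathcal E))^r$ into itself, and the reproducing kernel Hilbert space $\mathcal H(B)$ with kernel $K_B(x,y)=\sum_{n\ge0}\big(P_n(x)\overline{P_n(y)}I_r-(P_n\odot B)(x)((P_n\odot B)(y))^*\big)$ is finite dimensional.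
   Context: For $m\ge0$, $T^m_j=\frac{2(m-j+1)}{(m+1)(m+2)}$, $c_m=\sum_{j=0}^m(-1)^jT^m_j$, $P_m(x)=\frac1{c_m}\sum_{j=0}^mT^m_jx^{m-j}\overline{x}^{\,j}$. $\mathcal E=\{x\in\mathbb H:9x_0^2+x_1^2+x_2^2+x_3^2<1\}$; $(\mathbf H_2(\mathcal E))^r$ is the Hilbert space of functions $\sum_mP_mf_m$, $f_m\in\mathbb H^r$, with $\|f\|^2=\sum_mf_m^*f_m$. $\odot$ is the Cauchy–Kovalevskaya product $f\odot g=CK(f|_{x_0=0}g|_{x_0=0})$, satisfying $P_n\odot\big(\sum_mP_mb_m\big)=\sum_mP_{n+m}b_m$ for matrix coefficients $b_m$. *)

From HB Require Import structures.
From mathcomp Require Import all_boot all_order all_algebra.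
From mathcomp Require Import all_classical all_reals.
From mathcomp Require Import topology normedtype sequences.
From mathcomp Require Import ring.
Set Implicit Arguments. Unset Strict Implicit. Unset Printing Implicit Defensive.
Import Order.TTheory GRing.Theory Num.Theory.
Import numFieldNormedType.Exports.
Local Open Scope ring_scope.
Local Open Scope classical_set_scope.

Record quat (R : Type) := Quat { q0 : R; q1 : R; q2 : R; q3 : R }.

Module QuatEqChoice.
Definition to_seq (R : Type) (x : quat R) :=
  let: Quat a b c d := x in [:: a; b; c; d].
Definition of_seq (R : Type) (s : seq R) :=
  if s is [:: a; b; c; d] then Some (Quat a b c d) else None.
Lemma to_seqK (R : Type) : pcancel (@to_seq R) (@of_seq R).
Proof. by case. Qed.
End QuatEqChoice.

HB.instance Definition _ (R : choiceType) := Choice.copy (quat R)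
  (pcan_type (@QuatEqChoice.to_seqK R)).

Section QuatRing.
Variable R : comNzRingType.
Local Notation H := (quat R).

Definition qadd (x y : H) :=
  Quat (q0 x + q0 y) (q1 x + q1 y) (q2 x + q2 y) (q3 x + q3 y).
Definition qopp (x : H) := Quat (- q0 x) (- q1 x) (- q2 x) (- q3 x).
Definition qzero : H := Quat 0 0 0 0.
Definition qone : H := Quat 1 0 0 0.
(* Hamilton product, i^2 = j^2 = k^2 = ijk = -1 *)
Definition qmul (x y : H) :=
  let: Quat a1 b1 c1 d1 := x in let: Quat a2 b2 c2 d2 := y in
  Quat (a1 * a2 - b1 * b2 - c1 * c2 - d1 * d2)
       (a1 * b2 + b1 * a2 + c1 * d2 - d1 * c2)
       (a1 * c2 - b1 * d2 + c1 * a2 + d1 * b2)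
       (a1 * d2 + b1 * c2 - c1 * b2 + d1 * a2).

Lemma qaddA : associative qadd.
Proof. by move=> [? ? ? ?] [? ? ? ?] [? ? ? ?]; rewrite /qadd /= !addrA. Qed.
Lemma qaddC : commutative qadd.
Proof. by move=> [a b c d] [e f g h]; rewrite /qadd /= [a + _]addrC
  [b + _]addrC [c + _]addrC [d + _]addrC. Qed.
Lemma qadd0 : left_id qzero qadd.
Proof. by move=> [? ? ? ?]; rewrite /qadd /= !add0r. Qed.
Lemma qaddN : left_inverse qzero qopp qadd.
Proof. by move=> [? ? ? ?]; rewrite /qadd /= !addNr. Qed.

HB.instance Definition _ := GRing.isZmodule.Build H qaddA qaddC qadd0 qaddN.

Lemma qmulA : associative qmul.
Proof. move=> [? ? ? ?] [? ? ? ?] [? ? ? ?]; rewrite /qmul /=; congr Quat; ring. Qed.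
Lemma qmul1 : left_id qone qmul.
Proof. by move=> [? ? ? ?]; rewrite /qmul /=; congr Quat; ring. Qed.
Lemma qmulr1 : right_id qone qmul.
Proof. by move=> [? ? ? ?]; rewrite /qmul /=; congr Quat; ring. Qed.
Lemma qmulDl : left_distributive qmul qadd.
Proof. by move=> [? ? ? ?] [? ? ? ?] [? ? ? ?];
  rewrite /qmul /qadd /=; congr Quat; ring. Qed.
Lemma qmulDr : right_distributive qmul qadd.
Proof. by move=> [? ? ? ?] [? ? ? ?] [? ? ? ?];
  rewrite /qmul /qadd /=; congr Quat; ring. Qed.
Lemma qone_neq0 : qone != 0.
Proof. by apply/eqP => -[] /eqP; rewrite oner_eq0. Qed.

HB.instance Definition _ := GRing.Zmodule_isNzRing.Build H
  qmulA qmul1 qmulr1 qmulDl qmulDr qone_neq0.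

End QuatRing.

Section QuatAnalysis.
Variable R : realType.
Local Notation H := (quat R).

Definition qconj (x : H) : H := Quat (q0 x) (- q1 x) (- q2 x) (- q3 x).
Definition qR (a : R) : H := Quat a 0 0 0.

Definition Tcoef (m j : nat) : R :=
  (2 * ((m - j).+1)%:R) / ((m.+1)%:R * (m.+2)%:R).
Definition ccoef (m : nat) : R := \sum_(j < m.+1) (-1) ^+ j * Tcoef m j.
Definition Pm (m : nat) (x : H) : H :=
  qR (ccoef m)^-1 * \sum_(j < m.+1) qR (Tcoef m j) * x ^+ (m - j) * qconj x ^+ j.

Definition in_ellip (x : H) : bool :=
  9 * q0 x ^+ 2 + q1 x ^+ 2 + q2 x ^+ 2 + q3 x ^+ 2 < 1.

Definition mxadj (m n : nat) (M : 'M[H]_(m, n)) : 'M[H]_(n, m) :=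
  (map_mx qconj M)^T.
Definition unitary (n : nat) (U : 'M[H]_n) : Prop :=
  mxadj U *m U = 1%:M /\ U *m mxadj U = 1%:M.

(* convergence of quaternion sequences: componentwise (equivalently in |.|) *)
Definition qcvg (s : nat -> H) (l : H) : Prop :=
  [/\ (fun n => q0 (s n)) @ \oo --> q0 l, (fun n => q1 (s n)) @ \oo --> q1 l,
      (fun n => q2 (s n)) @ \oo --> q2 l & (fun n => q3 (s n)) @ \oo --> q3 l].

Definition mx_sum_to (m n : nat) (f : nat -> 'M[H]_(m, n)) (L : 'M[H]_(m, n)) : Prop :=
  forall i j, qcvg (fun K => (\sum_(k < K) f k) i j) (L i j).

(* ||f||^2 = sum_m f_m^* f_m  for f = sum_m P_m f_m in (H_2(E))^r *)
Definition H2_norm2_to (r : nat) (u : nat -> 'cV[H]_r) (s : R) : Prop :=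
  mx_sum_to (fun m => mxadj (u m) *m u m) (qR s)%:M.
Definition in_H2 (r : nat) (u : nat -> 'cV[H]_r) : Prop :=
  exists s : R, H2_norm2_to u s.

(* coefficients of B(x) = D + sum_{n>=1} P_n(x) C A^{n-1} B *)
Definition bcoef (N r : nat) (A : 'M[H]_N) (B : 'M[H]_(N, r))
  (C : 'M[H]_(r, N)) (D : 'M[H]_r) (m : nat) : 'M[H]_r :=
  if m is k.+1 then C *m A ^+ k *m B else D.

(* (P_n ⊙ B)(x) = sum_m P_{n+m}(x) b_m  is F *)
Definition PodotB_to (N r : nat) (A : 'M[H]_N) (B : 'M[H]_(N, r))
  (C : 'M[H]_(r, N)) (D : 'M[H]_r) (n : nat) (x : H) (F : 'M[H]_r) : Prop :=
  mx_sum_to (fun m => Pm (n + m) x *: bcoef A B C D m) F.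

Definition KB_to (N r : nat) (A : 'M[H]_N) (B : 'M[H]_(N, r))
  (C : 'M[H]_(r, N)) (D : 'M[H]_r) (x y : H) (K : 'M[H]_r) : Prop :=
  exists F G : nat -> 'M[H]_r,
    [/\ forall n, PodotB_to A B C D n x (F n),
        forall n, PodotB_to A B C D n y (G n) &
        mx_sum_to (fun n => (Pm n x * qconj (Pm n y))%:M - F n *m mxadj (G n)) K].

End QuatAnalysis.

From HB Require Import structures.
From mathcomp Require Import all_boot all_order all_algebra.
From mathcomp Require Import all_classical all_reals.
From mathcomp Require Import topology normedtype sequences.
From mathcomp Require Import ring lra zify.
Set Implicit Arguments. Unset Strict Implicit. Unset Printing Implicit Defensive.
Import Order.TTheory GRing.Theory Num.Theory.
Import numFieldNormedType.Exports.
Local Open Scope ring_scope.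
Local Open Scope classical_set_scope.

(* Write U for the unitary colligation and T_n(x) = sum_k P_(n+k)(x) C A^k.
   Then T_n = P_n C + T_(n+1) A and P_n ⊙ B = P_n D + T_(n+1) B, that is
   [T_n, P_n ⊙ B] = [T_(n+1), P_n] U.  As U U^* = 1, the n-th term of K_B(x, y)
   telescopes to T_n(x) T_n(y)^* - T_(n+1)(x) T_(n+1)(y)^*, and T_n -> 0
   geometrically on the ellipsoid since |P_m(x)| = O(m |x|^m); hence
   K_B(x, y) = T_0(x) T_0(y)^*, so H(B) is spanned by the N columns of T_0.
   For the isometry, the coefficients of M_B u are the outputs y_k = C x_k + D u_k
   of the system x_(k+1) = A x_k + B u_k, x_0 = 0.  As U^* U = 1,
   |x_(k+1)|^2 + |y_k|^2 = |x_k|^2 + |u_k|^2, and the state x_k tends to 0 (it is a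
   convolution of the summable |u_k|^2 with the summable row norms of A^j B), so
   sum_k |y_k|^2 = sum_k |u_k|^2. *)

(** * The quaternion norm *)

Section QuatNorm.
Variable R : realType.
Local Notation H := (quat R).
Implicit Types (p q : H) (a b : R).

Lemma qmulE p q : p * q = qmul p q. Proof. by []. Qed.
Lemma qaddE p q : p + q = qadd p q. Proof. by []. Qed.
Lemma qoppE p : - p = qopp p. Proof. by []. Qed.

Definition qnorm2 q : R := q0 q ^+ 2 + q1 q ^+ 2 + q2 q ^+ 2 + q3 q ^+ 2.
Definition qnorm q : R := Num.sqrt (qnorm2 q).
Definition qdot p q : R := q0 p * q0 q + q1 p * q1 q + q2 p * q2 q + q3 p * q3 q.

Lemma qnorm2_ge0 q : 0 <= qnorm2 q.
Proof. by rewrite /qnorm2 !addr_ge0 // sqr_ge0. Qed.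
Lemma qnorm_ge0 q : 0 <= qnorm q. Proof. exact: sqrtr_ge0. Qed.
Lemma sqr_qnorm q : qnorm q ^+ 2 = qnorm2 q.
Proof. by rewrite sqr_sqrtr // qnorm2_ge0. Qed.

Lemma qnorm2M p q : qnorm2 (p * q) = qnorm2 p * qnorm2 q.
Proof. by case: p q => [a b c d] [e f g h]; rewrite /qnorm2 qmulE /=; ring. Qed.
Lemma qnormM p q : qnorm (p * q) = qnorm p * qnorm q.
Proof. by rewrite /qnorm qnorm2M sqrtrM // qnorm2_ge0. Qed.

Lemma qconjM p q : qconj (p * q) = qconj q * qconj p.
Proof.
by case: p q => [a b c d] [e f g h]; rewrite /qconj !qmulE /=; congr Quat; ring.
Qed.
Lemma qconjD p q : qconj (p + q) = qconj p + qconj q.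
Proof. by case: p q => [a b c d] [e f g h]; rewrite /qconj /= /qadd /= !opprD. Qed.
Lemma qconj0 : qconj (0 : H) = 0.
Proof. by rewrite /qconj /= oppr0. Qed.
Lemma qconj1 : qconj (1 : H) = 1.
Proof. by rewrite /qconj /= oppr0. Qed.
Lemma qconj_sum I (s : seq I) (P : pred I) (F : I -> H) :
  qconj (\sum_(i <- s | P i) F i) = \sum_(i <- s | P i) qconj (F i).
Proof. exact: (big_morph _ qconjD qconj0). Qed.

Lemma qnorm_conj p : qnorm (qconj p) = qnorm p.
Proof. by case: p => a b c d; rewrite /qnorm /qnorm2 /qconj /= !sqrrN. Qed.

Lemma mul_qconjq p : qconj p * p = qR (qnorm2 p).
Proof. by case: p => a b c d; rewrite /qconj /qR /qnorm2 qmulE /=; congr Quat; ring. Qed.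
Lemma mulq_qconj p : p * qconj p = qR (qnorm2 p).
Proof. by case: p => a b c d; rewrite /qconj /qR /qnorm2 qmulE /=; congr Quat; ring. Qed.

Lemma qRD a b : qR (a + b) = qR a + qR b.
Proof. by rewrite /qR qaddE /qadd /= addr0. Qed.
Lemma qRB a b : qR (a - b) = qR a - qR b.
Proof. by rewrite /qR qaddE /qadd /= subr0. Qed.
Lemma qR_sum I (s : seq I) (P : pred I) (F : I -> R) :
  qR (\sum_(i <- s | P i) F i) = \sum_(i <- s | P i) qR (F i).
Proof. exact: (big_morph _ qRD (erefl _)). Qed.
Lemma qR_inj : injective (@qR R).
Proof. by move=> a b []. Qed.

Lemma q0_sum I (s : seq I) (P : pred I) (F : I -> H) :
  q0 (\sum_(i <- s | P i) F i) = \sum_(i <- s | P i) q0 (F i).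
Proof. by apply: big_morph. Qed.
Lemma q1_sum I (s : seq I) (P : pred I) (F : I -> H) :
  q1 (\sum_(i <- s | P i) F i) = \sum_(i <- s | P i) q1 (F i).
Proof. by apply: big_morph. Qed.
Lemma q2_sum I (s : seq I) (P : pred I) (F : I -> H) :
  q2 (\sum_(i <- s | P i) F i) = \sum_(i <- s | P i) q2 (F i).
Proof. by apply: big_morph. Qed.
Lemma q3_sum I (s : seq I) (P : pred I) (F : I -> H) :
  q3 (\sum_(i <- s | P i) F i) = \sum_(i <- s | P i) q3 (F i).
Proof. by apply: big_morph. Qed.

Lemma qnorm2_0 : qnorm2 (0 : H) = 0.
Proof. by rewrite /qnorm2 /= expr0n !addr0. Qed.
Lemma qnormR a : qnorm (qR a) = `|a|.
Proof. by rewrite /qnorm /qnorm2 /= expr0n /= !addr0 sqrtr_sqr. Qed.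
Lemma qnorm0 : qnorm (0 : H) = 0. Proof. by rewrite -[0]/(qR 0) qnormR normr0. Qed.
Lemma qnorm1 : qnorm (1 : H) = 1. Proof. by rewrite -[1]/(qR 1) qnormR normr1. Qed.

Lemma qnormX p k : qnorm (p ^+ k) = qnorm p ^+ k.
Proof. by elim: k => [|k IH]; rewrite ?qnorm1 // !exprS qnormM IH. Qed.

Lemma qnorm2D p q : qnorm2 (p + q) = qnorm2 p + qnorm2 q + 2 * qdot p q.
Proof. by case: p q => [a b c d] [e f g h]; rewrite /qnorm2 /qdot qaddE /=; ring. Qed.

Lemma qdot_sqr_le p q : qdot p q ^+ 2 <= qnorm2 p * qnorm2 q.
Proof.
case: p q => [a b c d] [e f g h]; rewrite /qnorm2 /qdot /= -subr_ge0.
(* Lagrange's identity *)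
have -> : (a ^+ 2 + b ^+ 2 + c ^+ 2 + d ^+ 2) * (e ^+ 2 + f ^+ 2 + g ^+ 2 + h ^+ 2) -
  (a * e + b * f + c * g + d * h) ^+ 2 =
  (a * f - b * e) ^+ 2 + (a * g - c * e) ^+ 2 + (a * h - d * e) ^+ 2 +
  (b * g - c * f) ^+ 2 + (b * h - d * f) ^+ 2 + (c * h - d * g) ^+ 2 by ring.
by rewrite !addr_ge0 // sqr_ge0.
Qed.

Lemma ler_of_sqr a b : 0 <= b -> a ^+ 2 <= b ^+ 2 -> a <= b.
Proof. by move=> b0 h; nra. Qed.

Lemma qnormD p q : qnorm (p + q) <= qnorm p + qnorm q.
Proof.
apply: ler_of_sqr; first by rewrite addr_ge0 // qnorm_ge0.
have h : qdot p q <= qnorm p * qnorm q.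
  apply: ler_of_sqr; first by rewrite mulr_ge0 // qnorm_ge0.
  by rewrite exprMn !sqr_qnorm qdot_sqr_le.
by rewrite sqr_qnorm qnorm2D sqrrD !sqr_qnorm; nra.
Qed.

Lemma qnorm_sum I (s : seq I) (P : pred I) (F : I -> H) :
  qnorm (\sum_(i <- s | P i) F i) <= \sum_(i <- s | P i) qnorm (F i).
Proof.
elim/big_rec2: _ => [|i y1 y2 _ IH]; first by rewrite qnorm0.
by apply: le_trans (qnormD _ _) _; rewrite lerD2l.
Qed.

Lemma qcomp_le_qnorm q :
  [/\ `|q0 q| <= qnorm q, `|q1 q| <= qnorm q, `|q2 q| <= qnorm q & `|q3 q| <= qnorm q].
Proof. by case: q => a b c d; rewrite /qnorm /qnorm2 /=; split; rewrite -sqrtr_sqr ler_sqrt; nra. Qed.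

Lemma qnorm2D_le p q : qnorm2 (p + q) <= 2 * (qnorm2 p + qnorm2 q).
Proof.
have <- : qnorm2 (p + q) + qnorm2 (p - q) = 2 * (qnorm2 p + qnorm2 q).
  by case: p q => [a b c d] [e f g h]; rewrite /qnorm2 !qaddE !qoppE /=; ring.
by rewrite lerDl qnorm2_ge0.
Qed.

Lemma qnorm2_sum_le I (s : seq I) (P : pred I) (z : I -> H) (al be : I -> R) :
  (forall i, P i -> 0 <= al i) -> (forall i, P i -> 0 <= be i) ->
  (forall i, P i -> qnorm2 (z i) <= al i * be i) ->
  qnorm2 (\sum_(i <- s | P i) z i) <=
    (\sum_(i <- s | P i) al i) * (\sum_(i <- s | P i) be i).
Proof.
move=> al0 be0 hz; elim: s => [|i s IH]; first by rewrite !big_nil qnorm2_0 mulr0.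
rewrite !big_cons; case: ifP => Pi //.
have A0 : 0 <= \sum_(j <- s | P j) al j by rewrite sumr_ge0.
have B0 : 0 <= \sum_(j <- s | P j) be j by rewrite sumr_ge0.
move: IH (hz i Pi) (al0 i Pi) (be0 i Pi) A0 B0.
set A := \sum_(j <- s | P j) al j; set B := \sum_(j <- s | P j) be j.
set S := \sum_(j <- s | P j) z j => hS hi ai bi A0 B0.
have cross : 2 * qdot (z i) S <= A * be i + al i * B.
  apply: ler_of_sqr; first by rewrite addr_ge0 // mulr_ge0.
  have hd : qdot (z i) S ^+ 2 <= (al i * be i) * (A * B).
    by apply: le_trans (qdot_sqr_le _ _) _; apply: ler_pM => //; apply: qnorm2_ge0.
  have amgm : 4 * ((al i * be i) * (A * B)) <= (A * be i + al i * B) ^+ 2.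
    rewrite -subr_ge0 (_ : _ - _ = (A * be i - al i * B) ^+ 2) ?sqr_ge0 //; ring.
  by apply: le_trans amgm; rewrite exprMn (_ : (2:R) ^+ 2 = 4) ?ler_pM2l //; ring.
by rewrite qnorm2D; nra.
Qed.

End QuatNorm.

(** * Quaternion matrices *)

Section QuatMatrix.
Variable R : realType.
Local Notation H := (quat R).

Lemma mxadjE m n (M : 'M[H]_(m, n)) i j : mxadj M i j = qconj (M j i).
Proof. by rewrite /mxadj !mxE. Qed.

Lemma mxadj0 m n : mxadj (0 : 'M[H]_(m, n)) = 0.
Proof. by apply/matrixP => i j; rewrite !mxadjE !mxE qconj0. Qed.

Lemma mxadjM m n p (M : 'M[H]_(m, n)) (N : 'M[H]_(n, p)) :
  mxadj (M *m N) = mxadj N *m mxadj M.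
Proof.
apply/matrixP => i j; rewrite !mxadjE !mxE qconj_sum.
by apply: eq_bigr => k _; rewrite qconjM !mxadjE.
Qed.

Lemma mxadj_scalar n (a : H) : mxadj (a%:M : 'M[H]_n) = (qconj a)%:M.
Proof.
apply/matrixP => i j; rewrite !mxadjE !mxE.
by case: (eqVneq i j) => _; rewrite ?mulr1n ?mulr0n ?qconj0.
Qed.

Lemma mxadj_block m1 m2 n1 n2 (Aul : 'M[H]_(m1, n1)) (Aur : 'M[H]_(m1, n2))
  (Adl : 'M[H]_(m2, n1)) (Adr : 'M[H]_(m2, n2)) :
  mxadj (block_mx Aul Aur Adl Adr) =
  block_mx (mxadj Aul) (mxadj Adl) (mxadj Aur) (mxadj Adr).
Proof. by rewrite /mxadj map_block_mx tr_block_mx. Qed.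

Lemma mxadj_row m n1 n2 (A1 : 'M[H]_(m, n1)) (A2 : 'M[H]_(m, n2)) :
  mxadj (row_mx A1 A2) = col_mx (mxadj A1) (mxadj A2).
Proof. by rewrite /mxadj map_row_mx tr_row_mx. Qed.

Lemma unitary_rows N r (A : 'M[H]_N) (B : 'M[H]_(N, r)) (C : 'M[H]_(r, N))
  (D : 'M[H]_r) : unitary (block_mx A B C D) ->
  A *m mxadj A + B *m mxadj B = 1%:M /\ C *m mxadj C + D *m mxadj D = 1%:M.
Proof.
case=> _; rewrite mxadj_block mulmx_block (scalar_mx_block N r).
by case/eq_block_mx.
Qed.

Lemma mulmx_col_sum m n (M : 'M[H]_(m, n)) (v : 'cV[H]_n) :
  M *m v = \sum_(i < n) col i M *m (v i 0)%:M.
Proof.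
apply/matrixP => a b; rewrite !mxE summxE; apply: eq_bigr => i _.
by rewrite !mxE big_ord1 !mxE (ord1 b) eqxx mulr1n.
Qed.

Definition vnorm2 n (v : 'cV[H]_n) : R := \sum_i qnorm2 (v i 0).
Definition rnorm2 m n (M : 'M[H]_(m, n)) (i : 'I_m) : R := \sum_k qnorm2 (M i k).

Lemma vnorm2_ge0 n (v : 'cV[H]_n) : 0 <= vnorm2 v.
Proof. by apply: sumr_ge0 => i _; apply: qnorm2_ge0. Qed.
Lemma rnorm2_ge0 m n (M : 'M[H]_(m, n)) i : 0 <= rnorm2 M i.
Proof. by apply: sumr_ge0 => k _; apply: qnorm2_ge0. Qed.

Lemma mxadj_mul_vnorm2 n (v : 'cV[H]_n) : (mxadj v *m v) 0 0 = qR (vnorm2 v).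
Proof. by rewrite !mxE qR_sum; apply: eq_bigr => i _; rewrite mxadjE mul_qconjq. Qed.

Lemma mul_mxadj_rnorm2 m n (M : 'M[H]_(m, n)) i : (M *m mxadj M) i i = qR (rnorm2 M i).
Proof. by rewrite !mxE qR_sum; apply: eq_bigr => k _; rewrite mxadjE mulq_qconj. Qed.

Lemma qnorm2_le_vnorm2 n (v : 'cV[H]_n) i : qnorm2 (v i 0) <= vnorm2 v.
Proof. by rewrite /vnorm2 (bigD1 i) //= lerDl; apply: sumr_ge0 => k _; apply: qnorm2_ge0. Qed.

Lemma qnorm2_le_rnorm2 m n (M : 'M[H]_(m, n)) i j : qnorm2 (M i j) <= rnorm2 M i.
Proof. by rewrite /rnorm2 (bigD1 j) //= lerDl; apply: sumr_ge0 => k _; apply: qnorm2_ge0. Qed.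

Lemma qnorm_le_rnorm2 m n (M : 'M[H]_(m, n)) i j :
  qnorm (M i j) <= Num.sqrt (rnorm2 M i).
Proof. by rewrite ler_sqrt ?rnorm2_ge0 ?qnorm2_le_rnorm2. Qed.

Lemma vnorm2_col m1 m2 (a : 'cV[H]_m1) (b : 'cV[H]_m2) :
  vnorm2 (col_mx a b) = vnorm2 a + vnorm2 b.
Proof.
by rewrite /vnorm2 big_split_ord /=; congr (_ + _); apply: eq_bigr => i _;
  rewrite ?col_mxEu ?col_mxEd.
Qed.

Lemma vnorm2_isometry n (U : 'M[H]_n) (z : 'cV[H]_n) :
  mxadj U *m U = 1%:M -> vnorm2 (U *m z) = vnorm2 z.
Proof.
move=> hU; apply: qR_inj; rewrite -!mxadj_mul_vnorm2 mxadjM.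
by rewrite -mulmxA (mulmxA (mxadj U)) hU mul1mx.
Qed.

Lemma rnorm2_1 n (i : 'I_n) : rnorm2 (1%:M : 'M[H]_n) i = 1.
Proof.
apply: qR_inj; rewrite -mul_mxadj_rnorm2 mxadj_scalar qconj1 mulmx1.
by rewrite !mxE eqxx mulr1n.
Qed.

Lemma rnorm2_rowD m n p (C : 'M[H]_(m, n)) (D : 'M[H]_(m, p)) i :
  C *m mxadj C + D *m mxadj D = 1%:M -> rnorm2 C i + rnorm2 D i = 1.
Proof.
move=> /(congr1 (fun M : 'M[H]_m => M i i)) /=.
rewrite [X in X = _ -> _]mxE !mul_mxadj_rnorm2 mxE eqxx mulr1n -qRD.
exact: qR_inj.
Qed.

Lemma rnorm2_mulmx_split m n p (M : 'M[H]_(m, n)) (A : 'M[H]_n) (B : 'M[H]_(n, p)) i :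
  A *m mxadj A + B *m mxadj B = 1%:M ->
  rnorm2 (M *m A) i = rnorm2 M i - rnorm2 (M *m B) i.
Proof.
move=> hAB; apply: qR_inj; rewrite qRB -!mul_mxadj_rnorm2 !mxadjM !mulmxA.
rewrite -(mulmxA M A) -(mulmxA M B) -[A *m mxadj A](addrK (B *m mxadj B)) hAB.
by rewrite mulmxBr mulmx1 mulmxBl !mulmxA [LHS]mxE [X in _ + X = _]mxE.
Qed.

Lemma qnorm_mul_entry m n p (M : 'M[H]_(m, n)) (N : 'M[H]_(n, p)) i j :
  qnorm ((M *m N) i j) <= \sum_k qnorm (M i k) * qnorm (N k j).
Proof.
rewrite mxE; apply: le_trans (qnorm_sum _ _ _) _.
by apply: ler_sum => k _; rewrite qnormM.
Qed.

Definition mxnorm1 m n (M : 'M[H]_(m, n)) : R := \sum_i \sum_j qnorm (M i j).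

Lemma mxnorm1_ge0 m n (M : 'M[H]_(m, n)) : 0 <= mxnorm1 M.
Proof. by apply: sumr_ge0 => i _; apply: sumr_ge0 => j _; apply: qnorm_ge0. Qed.

Lemma qnorm_le_mxnorm1 m n (M : 'M[H]_(m, n)) i j : qnorm (M i j) <= mxnorm1 M.
Proof.
rewrite /mxnorm1 (bigD1 i) //= (bigD1 j) //= -addrA lerDl.
rewrite addr_ge0 //; apply: sumr_ge0 => k _; first exact: qnorm_ge0.
by apply: sumr_ge0 => l _; apply: qnorm_ge0.
Qed.

End QuatMatrix.

(** * Convergence of real, quaternion and matrix sequences *)

Lemma sum_ord_addn (V : nmodType) (f : nat -> V) L M :
  \sum_(j < L + M) f j = \sum_(j < L) f j + \sum_(j < M) f (L + j)%N.
Proof. by rewrite big_split_ord. Qed.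

Section RealSeries.
Variable R : realType.
Implicit Types (f g u v : nat -> R).

Lemma nondecreasing_partial_sum f : (forall k, 0 <= f k) ->
  nondecreasing_seq (fun K => \sum_(k < K) f k).
Proof.
move=> f0 n m nm; rewrite -!(big_mkord xpredT).
by rewrite (big_cat_nat (leq0n n) nm) /= lerDl; apply: sumr_ge0.
Qed.

Lemma partial_sum_le_lim f s : (forall k, 0 <= f k) ->
  (fun K => \sum_(k < K) f k) @ \oo --> s -> forall K, \sum_(k < K) f k <= s.
Proof.
move=> f0 hs K; rewrite -(cvg_lim _ hs) //.
by apply: nondecreasing_cvgn_le; [exact: nondecreasing_partial_sum | apply/cvg_ex; exists s].
Qed.

Lemma cvg_le_cst u l B : u @ \oo --> l -> (forall n, u n <= B) -> l <= B.
Proof. by move=> hu hB; apply: (ler_cvg_to hu (cvg_cst B)); apply: nearW. Qed.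

Lemma series_ordE f : series f = (fun K => \sum_(k < K) f k).
Proof. by apply/funext => K; rewrite /series /= big_mkord. Qed.

Lemma abs_partial_sum_cvg f g B :
  (forall k, `|f k| <= g k) -> (forall K, \sum_(k < K) g k <= B) ->
  cvgn (fun K => \sum_(k < K) f k).
Proof.
move=> hfg hB; have habs : cvgn (fun K => \sum_(k < K) `|f k|).
  apply: (nondecreasing_is_cvgn (nondecreasing_partial_sum (fun k => normr_ge0 (f k)))).
  exists B => _ [n _ <-]; apply: le_trans (hB n).
  by apply: ler_sum => k _; apply: hfg.
rewrite -series_ordE; apply: normed_cvg.
by move: habs; rewrite -(series_ordE (fun k => `|f k|)).
Qed.

Lemma cvg_dist_le u v l : (forall n, `|u n - l| <= v n) -> v @ \oo --> 0 ->
  u @ \oo --> l.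
Proof.
move=> h hv; apply/subr_cvg0/cvgr0Pnorm_le => e e0.
near=> n; apply: le_trans (h n) _; apply: le_trans (ler_norm _) _.
near: n; exact: cvgr0_norm_le.
Unshelve. all: by end_near. Qed.

Lemma cvg0_sqrt v : (forall n, 0 <= v n) -> v @ \oo --> 0 ->
  (fun n => Num.sqrt (v n)) @ \oo --> 0.
Proof.
move=> v0 hv; apply/cvgr0Pnorm_le => e e0.
have e20 : 0 < e ^+ 2 by rewrite exprn_gt0.
near=> n; rewrite ger0_norm ?sqrtr_ge0 // -(ger0_norm (ltW e0)) -sqrtr_sqr.
rewrite ler_sqrt ?sqr_ge0 // -(ger0_norm (v0 n)).
by near: n; apply: cvgr0_norm_le.
Unshelve. all: by end_near. Qed.

Lemma sum_geometric_le (s : R) K : 0 <= s < 1 -> \sum_(k < K) s ^+ k <= (1 - s)^-1.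
Proof.
case/andP => s0 s1; have d0 : 0 < 1 - s by rewrite subr_gt0.
rewrite -[(1 - s)^-1]mul1r ler_pdivlMr //.
have -> : (\sum_(k < K) s ^+ k) * (1 - s) = 1 - s ^+ K.
  elim: K => [|K IH]; first by rewrite big_ord0 expr0 mul0r subrr.
  by rewrite big_ord_recr /= mulrDl IH exprS; ring.
by rewrite lerBlDr lerDl exprn_ge0.
Qed.

End RealSeries.

Section QuatConvergence.
Variable R : realType.
Local Notation H := (quat R).
Implicit Types (p q l a b : H) (s t : nat -> H).

Lemma q0M p q : q0 (p * q) = q0 p * q0 q - q1 p * q1 q - q2 p * q2 q - q3 p * q3 q.
Proof. by case: p q => [? ? ? ?] [? ? ? ?]. Qed.
Lemma q1M p q : q1 (p * q) = q0 p * q1 q + q1 p * q0 q + q2 p * q3 q - q3 p * q2 q.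
Proof. by case: p q => [? ? ? ?] [? ? ? ?]. Qed.
Lemma q2M p q : q2 (p * q) = q0 p * q2 q - q1 p * q3 q + q2 p * q0 q + q3 p * q1 q.
Proof. by case: p q => [? ? ? ?] [? ? ? ?]. Qed.
Lemma q3M p q : q3 (p * q) = q0 p * q3 q + q1 p * q2 q - q2 p * q1 q + q3 p * q0 q.
Proof. by case: p q => [? ? ? ?] [? ? ? ?]. Qed.

Lemma qcvg_cst l : qcvg (fun _ => l) l.
Proof. by split; apply: cvg_cst. Qed.

Lemma qcvg_ext s t a : (forall n, s n = t n) -> qcvg s a -> qcvg t a.
Proof. by move=> e; rewrite (_ : t = s) //; apply/funext => n; rewrite e. Qed.

Lemma qcvgD s t a b : qcvg s a -> qcvg t b -> qcvg (fun n => s n + t n) (a + b).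
Proof. by case=> ? ? ? ? [? ? ? ?]; split; apply: cvgD. Qed.

Lemma qcvgN s a : qcvg s a -> qcvg (fun n => - s n) (- a).
Proof. by case=> ? ? ? ?; split; apply: cvgN. Qed.

Lemma qcvg_conj s a : qcvg s a -> qcvg (fun n => qconj (s n)) (qconj a).
Proof. by case=> ? ? ? ?; split => //=; apply: cvgN. Qed.

Lemma qcvgM s t a b : qcvg s a -> qcvg t b -> qcvg (fun n => s n * t n) (a * b).
Proof.
case=> ? ? ? ? [? ? ? ?]; split.
- rewrite q0M; under eq_fun do rewrite q0M.
  by apply: cvgB; [apply: cvgB; [apply: cvgB|]|]; apply: cvgM.
- rewrite q1M; under eq_fun do rewrite q1M.
  by apply: cvgB; [apply: cvgD; [apply: cvgD|]|]; apply: cvgM.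
- rewrite q2M; under eq_fun do rewrite q2M.
  by apply: cvgD; [apply: cvgD; [apply: cvgB|]|]; apply: cvgM.
- rewrite q3M; under eq_fun do rewrite q3M.
  by apply: cvgD; [apply: cvgB; [apply: cvgD|]|]; apply: cvgM.
Qed.

Lemma qcvg_R (u : nat -> R) (a : R) : u @ \oo --> a -> qcvg (fun n => qR (u n)) (qR a).
Proof. by move=> h; split => //=; apply: cvg_cst. Qed.

Lemma qcvg_sum I (r : seq I) (P : pred I) (F : I -> nat -> H) (L : I -> H) :
  (forall i, P i -> qcvg (F i) (L i)) ->
  qcvg (fun K => \sum_(i <- r | P i) F i K) (\sum_(i <- r | P i) L i).
Proof.
move=> h; elim: r => [|i r IH].
  by under eq_fun do rewrite big_nil; rewrite big_nil; apply: qcvg_cst.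
under eq_fun do rewrite big_cons; rewrite big_cons.
by case: ifP => Pi //; apply: qcvgD => //; apply: h.
Qed.

Lemma qcvg_unique s a b : qcvg s a -> qcvg s b -> a = b.
Proof.
case: a b => [? ? ? ?] [? ? ? ?] [h0 h1 h2 h3] [g0 g1 g2 g3] /=.
by congr Quat; [move: h0 g0|move: h1 g1|move: h2 g2|move: h3 g3];
  apply: (cvg_unique (@Rhausdorff R)).
Qed.

Lemma qcvg_qnorm_le s a B : qcvg s a -> (forall n, qnorm (s n) <= B) -> qnorm a <= B.
Proof.
case=> ? ? ? ? hB; have B0 : 0 <= B by apply: le_trans (hB 0%N); apply: qnorm_ge0.
apply: ler_of_sqr => //; rewrite sqr_qnorm.
have qnorm2_cvg : (fun n => qnorm2 (s n)) @ \oo --> qnorm2 a.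
  by apply: cvgD; [apply: cvgD; [apply: cvgD|]|]; apply: cvgM.
apply: (cvg_le_cst qnorm2_cvg) => n.
by rewrite -sqr_qnorm lerXn2r // ?nnegrE ?qnorm_ge0.
Qed.

Lemma qcvg_dist_le s a (v : nat -> R) : (forall n, qnorm (s n - a) <= v n) ->
  v @ \oo --> 0 -> qcvg s a.
Proof.
move=> h hv; split; apply: (cvg_dist_le _ hv) => n; apply: le_trans (h n);
  by case: (qcomp_le_qnorm (s n - a)).
Qed.

Lemma qcvg_shiftS s a : qcvg (fun n => s n.+1) a <-> qcvg s a.
Proof. by rewrite /qcvg !(cvg_shiftS (fun n => _ (s n))). Qed.

Definition qlim s : H := Quat (limn (fun n => q0 (s n))) (limn (fun n => q1 (s n)))
  (limn (fun n => q2 (s n))) (limn (fun n => q3 (s n))).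

Lemma abs_qseries_cvg (f : nat -> H) (g : nat -> R) B :
  (forall k, qnorm (f k) <= g k) -> (forall K, \sum_(k < K) g k <= B) ->
  qcvg (fun K => \sum_(k < K) f k) (qlim (fun K => \sum_(k < K) f k)) /\
  qnorm (qlim (fun K => \sum_(k < K) f k)) <= B.
Proof.
move=> hf hB.
have hcomp (c : H -> R) : (forall q, `|c q| <= qnorm q) ->
    cvgn (fun K => \sum_(k < K) c (f k)).
  move=> hc; apply: (@abs_partial_sum_cvg _ (fun k => c (f k)) g B _ hB) => k.
  exact: le_trans (hc _) (hf k).
have hc : qcvg (fun K => \sum_(k < K) f k) (qlim (fun K => \sum_(k < K) f k)).
  split => /=.
  - by under eq_fun do rewrite q0_sum; apply: hcomp => q; case: (qcomp_le_qnorm q).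
  - by under eq_fun do rewrite q1_sum; apply: hcomp => q; case: (qcomp_le_qnorm q).
  - by under eq_fun do rewrite q2_sum; apply: hcomp => q; case: (qcomp_le_qnorm q).
  - by under eq_fun do rewrite q3_sum; apply: hcomp => q; case: (qcomp_le_qnorm q).
split => //; apply: (qcvg_qnorm_le hc) => K.
apply: le_trans (qnorm_sum _ _ _) _; apply: le_trans (hB K).
by apply: ler_sum => k _; apply: hf.
Qed.

End QuatConvergence.

Section MatrixConvergence.
Variable R : realType.
Local Notation H := (quat R).
Variables m n : nat.
Implicit Types (S T : nat -> 'M[H]_(m, n)) (L M : 'M[H]_(m, n)).

Definition mxcvg S L : Prop := forall i j, qcvg (fun K => S K i j) (L i j).

Lemma mx_sum_toE (f : nat -> 'M[H]_(m, n)) L :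
  mx_sum_to f L = mxcvg (fun K => \sum_(k < K) f k) L.
Proof. by []. Qed.

Lemma mxcvg_cst L : mxcvg (fun _ => L) L.
Proof. by move=> i j; apply: qcvg_cst. Qed.

Lemma mxcvg_ext S T L : (forall K, S K = T K) -> mxcvg S L -> mxcvg T L.
Proof. by move=> e h i j; apply: qcvg_ext (h i j) => K; rewrite e. Qed.

Lemma mxcvgD S T L M : mxcvg S L -> mxcvg T M -> mxcvg (fun K => S K + T K) (L + M).
Proof.
by move=> h g i j; rewrite mxE; apply: qcvg_ext (qcvgD (h i j) (g i j)) => K; rewrite mxE.
Qed.

Lemma mxcvgN S L : mxcvg S L -> mxcvg (fun K => - S K) (- L).
Proof. by move=> h i j; rewrite mxE; apply: qcvg_ext (qcvgN (h i j)) => K; rewrite mxE. Qed.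

Lemma mxcvgB S T L M : mxcvg S L -> mxcvg T M -> mxcvg (fun K => S K - T K) (L - M).
Proof. by move=> h g; apply: mxcvgD h (mxcvgN g). Qed.

Lemma mxcvg_unique S L M : mxcvg S L -> mxcvg S M -> L = M.
Proof. by move=> h g; apply/matrixP => i j; apply: qcvg_unique (h i j) (g i j). Qed.

Lemma mxcvg_dist_le S L (v : nat -> R) :
  (forall K i j, qnorm (S K i j - L i j) <= v K) -> v @ \oo --> 0 -> mxcvg S L.
Proof. by move=> h hv i j; apply: qcvg_dist_le hv => K; apply: h. Qed.

Lemma mxcvg_shiftS S L : mxcvg (fun K => S K.+1) L <-> mxcvg S L.
Proof. by split => h i j; apply/(qcvg_shiftS (fun K => S K i j)); apply: h. Qed.

Definition mxseries_lim (f : nat -> 'M[H]_(m, n)) : 'M[H]_(m, n) :=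
  \matrix_(i, j) qlim (fun K => \sum_(k < K) f k i j).

Lemma abs_mxseries_cvg (f : nat -> 'M[H]_(m, n)) (g : nat -> R) B :
  (forall k i j, qnorm (f k i j) <= g k) -> (forall K, \sum_(k < K) g k <= B) ->
  mx_sum_to f (mxseries_lim f) /\ forall i j, qnorm (mxseries_lim f i j) <= B.
Proof.
move=> hf hB; have h i j := abs_qseries_cvg (fun k => hf k i j) hB.
split => i j; rewrite mxE; have [h1 h2] := h i j => //.
by apply: qcvg_ext h1 => K; rewrite summxE.
Qed.

End MatrixConvergence.

Lemma mxcvgM (R : realType) m n p (S : nat -> 'M[quat R]_(m, n))
  (T : nat -> 'M[quat R]_(n, p)) L M :
  mxcvg S L -> mxcvg T M -> mxcvg (fun K => S K *m T K) (L *m M).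
Proof.
move=> h g i j; rewrite mxE; apply: qcvg_ext; last first.
  by apply: qcvg_sum => l _; apply: qcvgM (h i l) (g l j).
by move=> K; rewrite mxE.
Qed.

Lemma mxcvg_adj (R : realType) m n (S : nat -> 'M[quat R]_(m, n)) L :
  mxcvg S L -> mxcvg (fun K => mxadj (S K)) (mxadj L).
Proof.
by move=> h i j; rewrite mxadjE; apply: qcvg_ext (qcvg_conj (h j i)) => K; rewrite mxadjE.
Qed.

(** * Growth of the polynomials [P_m] on the ellipsoid *)

Section PmBound.
Variable R : realType.
Local Notation H := (quat R).

Definition alt_sum (m : nat) : R := \sum_(j < m.+1) (-1) ^+ j * ((m - j).+1)%:R.

Lemma alt_sumS m : alt_sum m.+1 = (m.+2)%:R - alt_sum m.
Proof.
rewrite /alt_sum big_ord_recl /= expr0 mul1r subn0; congr (_ + _).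
by rewrite -sumrN; apply: eq_bigr => j _; rewrite /= exprS subSS; ring.
Qed.

Lemma alt_sum_bounds m : (m.+1)%:R <= 2 * alt_sum m <= (m.+2)%:R.
Proof.
elim: m => [|m]; first by rewrite /alt_sum big_ord1 /= expr0 mul1r mulr1 !ler_nat.
by rewrite alt_sumS -!natr1 => /andP[? ?]; apply/andP; split; lra.
Qed.

Lemma ccoefE m : ccoef R m = 2 * alt_sum m / ((m.+1)%:R * (m.+2)%:R).
Proof.
rewrite /ccoef /Tcoef /alt_sum mulr_sumr mulr_suml; apply: eq_bigr => j _.
by rewrite mulrA; ring.
Qed.

Lemma ccoef_ge m : (m.+2)%:R ^-1 <= ccoef R m.
Proof.
rewrite ccoefE; have /andP[lb _] := alt_sum_bounds m.
have a0 : 0 < (m.+1)%:R :> R by rewrite ltr0n.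
have b0 : 0 < (m.+2)%:R :> R by rewrite ltr0n.
apply: le_trans (ler_wpM2r _ lb); last by rewrite invr_ge0 ltW // mulr_gt0.
by rewrite invfM mulrA divff ?mul1r // lt0r_neq0.
Qed.

Lemma ccoef_gt0 m : 0 < ccoef R m.
Proof. by apply: lt_le_trans (ccoef_ge m); rewrite invr_gt0 ltr0n. Qed.

Lemma invr_ccoef_le m : (ccoef R m)^-1 <= (m.+2)%:R.
Proof.
have c0 := ccoef_gt0 m; have b0 : 0 < (m.+2)%:R :> R by rewrite ltr0n.
rewrite -[(ccoef R m)^-1]mul1r ler_pdivrMr //.
apply: le_trans _ (ler_wpM2l (ltW b0) (ccoef_ge m)).
by rewrite divff // lt0r_neq0.
Qed.

Lemma Tcoef_ge0 m (j : 'I_m.+1) : 0 <= Tcoef R m j.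
Proof. by rewrite /Tcoef divr_ge0 // ?mulr_ge0 // ler0n. Qed.

Lemma Tcoef_le m (j : 'I_m.+1) : Tcoef R m j <= 2 / (m.+2)%:R.
Proof.
have a0 : 0 < (m.+1)%:R :> R by rewrite ltr0n.
have b0 : 0 < (m.+2)%:R :> R by rewrite ltr0n.
have -> : 2 / (m.+2)%:R = 2 * (m.+1)%:R / ((m.+1)%:R * (m.+2)%:R) :> R.
  by rewrite invfM mulrA mulfK // lt0r_neq0.
by rewrite /Tcoef ler_pM2r ?invr_gt0 ?mulr_gt0 // ler_pM2l // ler_nat ltnS leq_subr.
Qed.

Lemma qnorm_Pm_le m (x : H) : qnorm (Pm m x) <= 2 * (m.+2)%:R * qnorm x ^+ m.
Proof.
rewrite /Pm qnormM qnormR ger0_norm; last by rewrite invr_ge0 ltW // ccoef_gt0.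
have b0 : 0 < (m.+2)%:R :> R by rewrite ltr0n.
have hsum : qnorm (\sum_(j < m.+1) qR (Tcoef R m j) * x ^+ (m - j) * qconj x ^+ j)
    <= 2 * qnorm x ^+ m.
  apply: le_trans (qnorm_sum _ _ _) _.
  apply: (@le_trans _ _ (\sum_(j < m.+1) (2 / (m.+2)%:R * qnorm x ^+ m))).
    apply: ler_sum => j _; rewrite !qnormM qnormR ger0_norm ?Tcoef_ge0 // !qnormX.
    rewrite qnorm_conj -mulrA -exprD subnK ?leq_ord //.
    by apply: ler_wpM2r; [rewrite exprn_ge0 // qnorm_ge0 | exact: Tcoef_le].
  rewrite sumr_const card_ord -(mulr_natl (2 / (m.+2)%:R * qnorm x ^+ m) m.+1).
  rewrite mulrA ler_wpM2r ?exprn_ge0 ?qnorm_ge0 //.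
  by rewrite mulrCA -[X in _ <= X]mulr1 ler_wpM2l // ler_pdivrMr // mul1r ler_nat.
have c0 : 0 <= (ccoef R m)^-1 by rewrite invr_ge0 ltW // ccoef_gt0.
apply: le_trans (ler_wpM2l c0 hsum) _.
by rewrite mulrA ler_wpM2r ?exprn_ge0 ?qnorm_ge0 // mulrC ler_wpM2l // invr_ccoef_le.
Qed.

Lemma in_ellip_qnorm_lt1 (x : H) : in_ellip x -> qnorm x < 1.
Proof.
rewrite /in_ellip => hx.
have h1 : qnorm2 x < 1 by rewrite /qnorm2; have := sqr_ge0 (q0 x); lra.
by have := qnorm_ge0 x; have := sqr_qnorm x; nra.
Qed.

Lemma natrM_expr_le (s : R) m : 0 <= s < 1 -> m%:R * s ^+ m <= (1 - s)^-1.
Proof.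
move=> s01; apply: le_trans (sum_geometric_le m s01); case/andP: s01 => s0 s1.
have -> : m%:R * s ^+ m = \sum_(k < m) s ^+ m by rewrite sumr_const card_ord mulr_natl.
by apply: ler_sum => k _; apply: ler_wiXn2l => //; [exact: ltW | exact: ltnW].
Qed.

Definition Prate (x : H) : R := Num.sqrt (qnorm x).
Definition Pconst (x : H) : R := 2 * (2 + (1 - Prate x)^-1).

Lemma Prate_ge0 x : 0 <= Prate x. Proof. exact: sqrtr_ge0. Qed.

Lemma Prate_lt1 x : in_ellip x -> Prate x < 1.
Proof. by move=> /in_ellip_qnorm_lt1 hx; rewrite /Prate -sqrtr1 ltr_sqrt // ltr01. Qed.

(* The factor [m + 2] of [qnorm_Pm_le] is absorbed by one of the two factors
   [Prate x ^+ m] of [qnorm x ^+ m = Prate x ^+ (2 * m)]. *)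
Lemma Pm_geometric x : in_ellip x -> forall m, qnorm (Pm m x) <= Pconst x * Prate x ^+ m.
Proof.
move=> /Prate_lt1 s1 m; have s0 := Prate_ge0 x.
have ss : Prate x ^+ 2 = qnorm x by rewrite /Prate sqr_sqrtr // qnorm_ge0.
apply: le_trans (qnorm_Pm_le m x) _.
rewrite -ss -exprM mulnC exprM /Pconst -!mulrA ler_wpM2l // expr2 mulrA.
have sm0 : 0 <= Prate x ^+ m by rewrite exprn_ge0.
have sm1 : Prate x ^+ m <= 1 by apply: exprn_ile1 => //; exact: ltW.
rewrite ler_wpM2r // -addn2 natrD mulrDl addrC.
apply: lerD; last by apply: natrM_expr_le; rewrite s0.
by rewrite -[X in _ <= X]mulr1 ler_wpM2l.
Qed.

End PmBound.

(** * Consequences of unitarity *)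

Section UnitaryColligation.
Variable R : realType.
Local Notation H := (quat R).
Variables (N r : nat) (A : 'M[H]_N) (B : 'M[H]_(N, r)) (C : 'M[H]_(r, N)) (D : 'M[H]_r).
Hypothesis hU : unitary (block_mx A B C D).

Let rowsAB := (unitary_rows hU).1.
Let rowsCD := (unitary_rows hU).2.

Lemma rnorm2_CA_le1 k i : rnorm2 (C *m A ^+ k) i <= 1.
Proof.
elim: k => [|k IH].
  by rewrite expr0 mulmx1; have := rnorm2_rowD i rowsCD; have := rnorm2_ge0 D i; lra.
rewrite exprSr mulmxA (rnorm2_mulmx_split _ _ rowsAB).
by have := rnorm2_ge0 (C *m A ^+ k *m B) i; lra.
Qed.

Lemma qnorm_CA_le1 k i j : qnorm ((C *m A ^+ k) i j) <= 1.
Proof.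
apply: le_trans (qnorm_le_rnorm2 _ i j) _.
by rewrite -sqrtr1 ler_sqrt ?ler01 // rnorm2_CA_le1.
Qed.

Lemma sum_rnorm2_AB_le1 i J : \sum_(j < J) rnorm2 (A ^+ j *m B) i <= 1.
Proof.
have -> : \sum_(j < J) rnorm2 (A ^+ j *m B) i = 1 - rnorm2 (A ^+ J) i.
  elim: J => [|J IH]; first by rewrite big_ord0 expr0 rnorm2_1 subrr.
  by rewrite big_ord_recr /= IH exprSr (rnorm2_mulmx_split _ _ rowsAB); ring.
by rewrite lerBlDr lerDl rnorm2_ge0.
Qed.

End UnitaryColligation.

(** * The realization [B = D + sum_n P_n C A^(n-1) B] at a point *)

Section Realization.
Variable R : realType.
Local Notation H := (quat R).
Variables (N r : nat) (A : 'M[H]_N) (B : 'M[H]_(N, r)) (C : 'M[H]_(r, N)) (D : 'M[H]_r).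

Definition CA_term (x : H) n k : 'M[H]_(r, N) := Pm (n + k) x *: (C *m A ^+ k).

(* [CA_tail x n = sum_k P_(n+k)(x) C A^k], so that
   [P_n ⊙ B = P_n D + CA_tail (n+1) B] and [CA_tail n = P_n C + CA_tail (n+1) A]. *)
Definition CA_tail (x : H) n : 'M[H]_(r, N) := mxseries_lim (CA_term x n).
Definition odotB (x : H) n : 'M[H]_r := Pm n x *: D + CA_tail x n.+1 *m B.

Hypothesis hU : unitary (block_mx A B C D).

Section AtPoint.
Variable x : H.
Hypothesis hx : in_ellip x.
Local Notation s := (Prate x).
Local Notation K := (Pconst x).

Let s01 : 0 <= s < 1. Proof. by rewrite Prate_ge0 Prate_lt1. Qed.
Let K0 : 0 <= K.
Proof. by have := Pm_geometric hx 0; rewrite expr0 mulr1; apply: le_trans; apply: qnorm_ge0. Qed.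

Lemma CA_tail_sum n : mx_sum_to (CA_term x n) (CA_tail x n) /\
  forall i j, qnorm (CA_tail x n i j) <= K * s ^+ n * (1 - s)^-1.
Proof.
apply: (@abs_mxseries_cvg _ _ _ _ (fun k => K * s ^+ (n + k))) => [k i j|L].
  rewrite /CA_term mxE qnormM -[K * _]mulr1.
  by apply: ler_pM; rewrite ?qnorm_ge0 ?(Pm_geometric hx) ?(qnorm_CA_le1 hU).
under eq_bigr do rewrite exprD mulrA.
rewrite -mulr_sumr ler_wpM2l ?sum_geometric_le //.
by rewrite mulr_ge0 ?exprn_ge0 ?Prate_ge0.
Qed.

Lemma CA_tail_cvg0 : mxcvg (CA_tail x) 0.
Proof.
apply: (@mxcvg_dist_le _ _ _ _ _ (geometric (K * (1 - s)^-1) s)).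
  move=> n i j; rewrite [X in _ - X]mxE subr0 /=.
  by apply: le_trans (proj2 (CA_tail_sum n) i j) _; rewrite mulrAC.
by case/andP: s01 => ? ?; apply: cvg_geometric; rewrite ger0_norm.
Qed.

Lemma CA_tail_rec n : CA_tail x n = Pm n x *: C + CA_tail x n.+1 *m A.
Proof.
apply: (mxcvg_unique (proj1 (CA_tail_sum n))); apply/mxcvg_shiftS.
apply: (@mxcvg_ext _ _ _ (fun L => Pm n x *: C + (\sum_(k < L) CA_term x n.+1 k) *m A)).
  move=> L; rewrite big_ord_recl mulmx_suml /CA_term addn0 expr0 mulmx1.
  congr (_ + _); apply: eq_bigr => k _.
  by rewrite /= addnS -addSn exprSr mulmxA -scalemxAl.
apply: mxcvgD; first exact: mxcvg_cst.
exact: mxcvgM (proj1 (CA_tail_sum n.+1)) (mxcvg_cst A).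
Qed.

Lemma odotB_sum n : PodotB_to A B C D n x (odotB x n).
Proof.
rewrite /PodotB_to mx_sum_toE; apply/mxcvg_shiftS.
apply: (@mxcvg_ext _ _ _ (fun L => Pm n x *: D + (\sum_(k < L) CA_term x n.+1 k) *m B)).
  move=> L; rewrite big_ord_recl /= addn0 mulmx_suml; congr (_ + _).
  by apply: eq_bigr => k _; rewrite /CA_term /= addnS -addSn -scalemxAl.
apply: mxcvgD; first exact: mxcvg_cst.
exact: mxcvgM (proj1 (CA_tail_sum n.+1)) (mxcvg_cst B).
Qed.

Lemma odotB_geometric :
  exists c, 0 <= c /\ forall k i j, qnorm (odotB x k i j) <= c * s ^+ k.
Proof.
case/andP: s01 => s0 s1; have d0 : 0 <= (1 - s)^-1 by rewrite invr_ge0 subr_ge0 ltW.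
exists (K * mxnorm1 D + N%:R * (K * (1 - s)^-1) * mxnorm1 B).
split.
  apply: addr_ge0; first exact: mulr_ge0 K0 (mxnorm1_ge0 D).
  exact: mulr_ge0 (mulr_ge0 (ler0n _ _) (mulr_ge0 K0 d0)) (mxnorm1_ge0 B).
move=> k i j; rewrite /odotB mxE; apply: le_trans (qnormD _ _) _.
rewrite mulrDl; apply: lerD.
  rewrite mxE qnormM mulrAC.
  by apply: ler_pM; rewrite ?qnorm_ge0 ?qnorm_le_mxnorm1 ?(Pm_geometric hx).
apply: le_trans (qnorm_mul_entry _ _ _ _) _.
apply: (@le_trans _ _ (\sum_(l < N) K * s ^+ k * (1 - s)^-1 * mxnorm1 B)).
  apply: ler_sum => l _; apply: ler_pM; rewrite ?qnorm_ge0 ?qnorm_le_mxnorm1 //.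
  apply: le_trans (proj2 (CA_tail_sum k.+1) i l) _.
  rewrite exprS; apply: ler_wpM2r => //; apply: ler_wpM2l => //.
  by rewrite -[X in _ <= X]mul1r ler_wpM2r ?exprn_ge0 // ltW.
by rewrite sumr_const card_ord -mulr_natl le_eqVlt; apply/orP; left; apply/eqP; ring.
Qed.

End AtPoint.

(* Both sides equal [[T0 F] [S0 G]^*] after expanding [[T0 F] = [T1 p] U],
   [[S0 G] = [S1 q] U] and using [U U^* = 1]. *)
Lemma gram_step (T0 T1 S0 S1 : 'M[H]_(r, N)) (F G : 'M[H]_r) (p q : H) :
  T0 = p *: C + T1 *m A -> F = p *: D + T1 *m B ->
  S0 = q *: C + S1 *m A -> G = q *: D + S1 *m B ->
  (p * qconj q)%:M - F *m mxadj G = T0 *m mxadj S0 - T1 *m mxadj S1.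
Proof.
move=> hT hF hS hG.
have hrow (X0 X1 : 'M[H]_(r, N)) (Y : 'M[H]_r) (a : H) :
    X0 = a *: C + X1 *m A -> Y = a *: D + X1 *m B ->
    row_mx X0 Y = row_mx X1 a%:M *m block_mx A B C D.
  move=> -> ->.
  by rewrite mul_row_block !mul_scalar_mx [a *: C + _]addrC [a *: D + _]addrC.
have gram : T0 *m mxadj S0 + F *m mxadj G = T1 *m mxadj S1 + (p * qconj q)%:M.
  rewrite -mul_row_col -mxadj_row (hrow _ _ _ _ hT hF) (hrow _ _ _ _ hS hG).
  rewrite mxadjM mulmxA -(mulmxA _ (block_mx A B C D)) (proj2 hU) mulmx1.
  by rewrite mxadj_row mul_row_col mxadj_scalar -scalar_mxM.
have -> : (p * qconj q)%:M = T0 *m mxadj S0 + F *m mxadj G - T1 *m mxadj S1.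
  by rewrite gram addrAC subrr add0r.
by rewrite addrAC addrK.
Qed.

Lemma KB_to_CA_tail x y : in_ellip x -> in_ellip y ->
  KB_to A B C D x y (CA_tail x 0 *m mxadj (CA_tail y 0)).
Proof.
move=> hx hy; exists (odotB x), (odotB y); split; [exact: odotB_sum | exact: odotB_sum|].
rewrite mx_sum_toE.
apply: (@mxcvg_ext _ _ _ (fun L => CA_tail x 0 *m mxadj (CA_tail y 0) -
    CA_tail x L *m mxadj (CA_tail y L))).
  elim=> [|L IH]; first by rewrite big_ord0 subrr.
  rewrite big_ord_recr /= -IH (gram_step (CA_tail_rec hx L) (erefl _)
    (CA_tail_rec hy L) (erefl _)).
  by rewrite addrA subrK.
have := mxcvgB (mxcvg_cst (CA_tail x 0 *m mxadj (CA_tail y 0)))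
  (mxcvgM (CA_tail_cvg0 hx) (mxcvg_adj (CA_tail_cvg0 hy))).
by rewrite mxadj0 mul0mx subr0.
Qed.

End Realization.

Lemma KB_to_unique (R : realType) N r (A : 'M[quat R]_N) (B : 'M[quat R]_(N, r))
  (C : 'M[quat R]_(r, N)) (D : 'M[quat R]_r) x y K1 K2 :
  KB_to A B C D x y K1 -> KB_to A B C D x y K2 -> K1 = K2.
Proof.
move=> [F1 [G1 [hF1 hG1 hK1]]] [F2 [G2 [hF2 hG2 hK2]]].
have eF : F2 = F1 by apply/funext => n; apply: mxcvg_unique (hF2 n) (hF1 n).
have eG : G2 = G1 by apply/funext => n; apply: mxcvg_unique (hG2 n) (hG1 n).
by rewrite eF eG in hK2; apply: mxcvg_unique hK1 hK2.
Qed.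

(** * [M_B] is an isometry *)

Lemma H2_norm2_toP (R : realType) r (v : nat -> 'cV[quat R]_r) s :
  H2_norm2_to v s <-> (fun K => \sum_(k < K) vnorm2 (v k)) @ \oo --> s.
Proof.
have eK K : (\sum_(k < K) mxadj (v k) *m v k) 0 0 = qR (\sum_(k < K) vnorm2 (v k)).
  by rewrite summxE qR_sum; apply: eq_bigr => k _; apply: mxadj_mul_vnorm2.
split => [h | h i j].
  by have [+ _ _ _] := h 0 0; rewrite mxE eqxx mulr1n /=; under eq_fun do rewrite eK.
rewrite (ord1 i) (ord1 j) mxE eqxx mulr1n.
by apply: qcvg_ext (qcvg_R h) => K; rewrite eK.
Qed.

Section Isometry.
Variable R : realType.
Local Notation H := (quat R).
Variables (N r : nat) (A : 'M[H]_N) (B : 'M[H]_(N, r)) (C : 'M[H]_(r, N)) (D : 'M[H]_r).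
Variable u : nat -> 'cV[H]_r.

(* The state and output of the system [x_(k+1) = A x_k + B u_k], [y_k = C x_k + D u_k]
   started at [x_0 = 0]; the output [y] is the coefficient sequence of [M_B u]. *)
Definition state k : 'cV[H]_N := \sum_(j < k) A ^+ j *m B *m u (k - j.+1)%N.
Definition output k : 'cV[H]_r := C *m state k + D *m u k.

Lemma state0 : state 0 = 0. Proof. by rewrite /state big_ord0. Qed.

Lemma stateS k : state k.+1 = A *m state k + B *m u k.
Proof.
rewrite /state big_ord_recl /= expr0 mul1mx subn1 /= addrC mulmx_sumr; congr (_ + _).
by apply: eq_bigr => j _; rewrite exprS -mulmxE !mulmxA /bump /= add1n subSS.
Qed.

Hypothesis hU : unitary (block_mx A B C D).

Lemma energy_balance k :
  vnorm2 (state k.+1) + vnorm2 (output k) = vnorm2 (state k) + vnorm2 (u k).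
Proof.
rewrite -!vnorm2_col (_ : col_mx _ _ = block_mx A B C D *m col_mx (state k) (u k)).
  by rewrite vnorm2_isometry //; case: hU.
by rewrite mul_block_col stateS.
Qed.

Lemma sum_output_energy K :
  \sum_(k < K) vnorm2 (output k) = \sum_(k < K) vnorm2 (u k) - vnorm2 (state K).
Proof.
elim: K => [|K IH].
  by rewrite !big_ord0 state0 /vnorm2 big1 ?subrr // => i _; rewrite mxE qnorm2_0.
by rewrite !big_ord_recr /= IH; have := energy_balance K; lra.
Qed.

Variable su : R.
Hypothesis hu : (fun K => \sum_(k < K) vnorm2 (u k)) @ \oo --> su.

Let sum_u_le : forall K, \sum_(k < K) vnorm2 (u k) <= su.
Proof. exact: partial_sum_le_lim (fun k => vnorm2_ge0 (u k)) hu. Qed.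
Let su0 : 0 <= su. Proof. by have := sum_u_le 0; rewrite big_ord0. Qed.

Section StateEntry.
Variable i : 'I_N.
Local Notation a j := (rnorm2 (A ^+ j *m B) i).
Local Notation b n := (vnorm2 (u n)).

Lemma qnorm2_state_split L M : qnorm2 (state (L + M) i 0) <=
  2 * ((\sum_(j < L) a j) * (\sum_(j < L) b (M + j)%N) +
       (\sum_(j < M) a (L + j)%N) * (\sum_(j < M) b j)).
Proof.
have qnorm2_term K j : qnorm2 ((A ^+ j *m B *m u K) i 0) <= a j * b K.
  by rewrite mxE; apply: qnorm2_sum_le => l _; rewrite ?qnorm2_ge0 ?qnorm2M.
have sum_rev (f : nat -> R) n : \sum_(j < n) f (n - j.+1)%N = \sum_(j < n) f j.
  by rewrite -[RHS](big_mkord xpredT) big_rev_mkord subn0.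
rewrite /state summxE big_split_ord /=.
apply: le_trans (qnorm2D_le _ _) _; rewrite ler_pM2l // lerD //.
  apply: le_trans.
    apply: (@qnorm2_sum_le _ _ _ _ _ (fun j : 'I_L => a j)
      (fun j : 'I_L => b (L + M - j.+1)%N)) => j _; rewrite ?rnorm2_ge0 ?vnorm2_ge0 //.
  apply: ler_wpM2l; first by apply: sumr_ge0 => j _; apply: rnorm2_ge0.
  rewrite -(sum_rev (fun k => b (M + k)%N)) le_eqVlt; apply/orP; left; apply/eqP.
  by apply: eq_bigr => j _; congr vnorm2; congr u; have := ltn_ord j; lia.
apply: le_trans.
  apply: (@qnorm2_sum_le _ _ _ _ _ (fun j : 'I_M => a (L + j)%N)
    (fun j : 'I_M => b (M - j.+1)%N)) => j _; rewrite ?rnorm2_ge0 ?vnorm2_ge0 //.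
  by rewrite (_ : (L + M - (L + j).+1 = M - j.+1)%N); [exact: qnorm2_term | lia].
apply: ler_wpM2l; first by apply: sumr_ge0 => j _; apply: rnorm2_ge0.
by rewrite (sum_rev (fun n => b n)).
Qed.

Let a_ge0 j : 0 <= a j. Proof. exact: rnorm2_ge0. Qed.

Lemma cvgn_sum_rnorm2_AB : cvgn (fun L => \sum_(j < L) a j).
Proof.
apply: (nondecreasing_is_cvgn (nondecreasing_partial_sum a_ge0)).
by exists 1 => _ [n _ <-]; apply: (sum_rnorm2_AB_le1 hU).
Qed.

Local Notation LA := (limn (fun L => \sum_(j < L) a j)).

Lemma qnorm2_state_tails L M : qnorm2 (state (L + M) i 0) <=
  2 * ((su - \sum_(j < M) b j) + (LA - \sum_(j < L) a j) * su).
Proof.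
apply: le_trans (qnorm2_state_split L M) _; rewrite ler_pM2l // lerD //.
  rewrite -[X in _ <= X]mul1r; apply: ler_pM.
  - by apply: sumr_ge0 => j _; apply: rnorm2_ge0.
  - by apply: sumr_ge0 => j _; apply: vnorm2_ge0.
  - exact: (sum_rnorm2_AB_le1 hU).
  - by rewrite lerBrDl -(sum_ord_addn (fun n => b n)).
apply: ler_pM; rewrite ?sum_u_le //.
- by apply: sumr_ge0 => j _; apply: rnorm2_ge0.
- by apply: sumr_ge0 => j _; apply: vnorm2_ge0.
rewrite lerBrDl -(sum_ord_addn (fun n => a n)).
exact: nondecreasing_cvgn_le (nondecreasing_partial_sum a_ge0) cvgn_sum_rnorm2_AB _.
Qed.

Lemma state_entry_cvg0 : (fun K => qnorm2 (state K i 0)) @ \oo --> 0.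
Proof.
apply/cvgr0Pnorm_le => e e0.
pose e1 := e / 4 / (su + 1).
have e10 : 0 < e1 by rewrite /e1 !divr_gt0 // (le_lt_trans su0) ?ltrDl.
have e40 : 0 < e / 4 by rewrite divr_gt0.
have [L _ hL] := proj1 (cvgrPdist_le _ LA) cvgn_sum_rnorm2_AB e1 e10.
have [M0 _ hM] := proj1 (cvgrPdist_le _ su) hu (e / 4) e40.
exists (L + M0)%N => // K hK /=.
rewrite (_ : K = L + (K - L))%N; last by move: hK => /=; lia.
rewrite ger0_norm ?qnorm2_ge0 //; apply: le_trans (qnorm2_state_tails L (K - L)) _.
have tail_b : su - \sum_(j < K - L) b j <= e / 4.
  by apply: le_trans (ler_norm _) (hM _ _); move: hK => /=; lia.
have tail_a : LA - \sum_(j < L) a j <= e1.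
  exact: le_trans (ler_norm _) (hL L (leqnn L)).
have tail_a_su : (LA - \sum_(j < L) a j) * su <= e / 4.
  apply: le_trans (ler_wpM2r su0 tail_a) _.
  rewrite /e1 mulrAC ler_pdivrMr ?(le_lt_trans su0) ?ltrDl //.
  by rewrite ler_wpM2l ?(ltW e40) ?lerDl.
lra.
Qed.

End StateEntry.

Lemma state_cvg0 : mxcvg state 0.
Proof.
move=> i j; rewrite (ord1 j) mxE.
apply: (@qcvg_dist_le _ _ _ (fun K => Num.sqrt (qnorm2 (state K i 0)))).
  by move=> K; rewrite subr0.
by apply: cvg0_sqrt; [move=> n; apply: qnorm2_ge0 | apply: state_entry_cvg0].
Qed.

Lemma output_H2 : H2_norm2_to output su.
Proof.
apply/H2_norm2_toP.
have -> : (fun K => \sum_(k < K) vnorm2 (output k)) =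
    (fun K => \sum_(k < K) vnorm2 (u k) - vnorm2 (state K)).
  by apply/funext => K; rewrite sum_output_energy.
rewrite -[su]subr0; apply: cvgB hu _.
have : (fun K => \sum_(i < N) qnorm2 (state K i 0)) @ \oo --> \sum_(i < N) (0 : R).
  apply: cvg_big => [|i _]; [exact: add_continuous | exact: state_entry_cvg0].
by rewrite big1.
Qed.

Lemma Pm_output_sum x : in_ellip x -> forall K,
  \sum_(k < K) Pm k x *: output k =
  \sum_(k < K) odotB A B C D x k *m u k - CA_tail A C x K *m state K.
Proof.
move=> hx; elim=> [|K IH]; first by rewrite !big_ord0 state0 mulmx0 subr0.
rewrite !big_ord_recr /= IH (CA_tail_rec hU hx K) stateS /odotB /output.
rewrite !mulmxDl !mulmxDr !scalerDr -!scalemxAl !mulmxA.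
set S := \sum_(k < K) _; set p := Pm K x *: (C *m state K).
set t := CA_tail A C x K.+1 *m A *m state K; set d := Pm K x *: (D *m u K).
set b := CA_tail A C x K.+1 *m B *m u K.
(* both sides equal [S - t + d] *)
rewrite [p + t]addrC opprD (addrA S) subrKA.
by rewrite (addrA S) [t + b]addrC addrKA addrAC.
Qed.

Lemma MB_at_point x : in_ellip x -> exists v : 'cV[H]_r,
  mx_sum_to (fun n => odotB A B C D x n *m u n) v /\
  mx_sum_to (fun k => Pm k x *: output k) v.
Proof.
move=> hx; have [c [c0 hc]] := odotB_geometric hU hx.
have s0 := Prate_ge0 x; have s1 := Prate_lt1 hx.
have u_le k l : qnorm (u k l 0) <= Num.sqrt su.
  apply: (@le_trans _ _ (Num.sqrt (vnorm2 (u k)))).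
    by rewrite ler_sqrt ?vnorm2_ge0 // qnorm2_le_vnorm2.
  rewrite ler_sqrt //; apply: le_trans (sum_u_le k.+1).
  by rewrite big_ord_recr /= lerDr sumr_ge0 // => j _; apply: vnorm2_ge0.
have term_le k a (z : 'I_1) : qnorm ((odotB A B C D x k *m u k) a z) <=
    r%:R * c * Num.sqrt su * Prate x ^+ k.
  apply: le_trans (qnorm_mul_entry _ _ _ _) _.
  apply: (@le_trans _ _ (\sum_(l < r) c * Prate x ^+ k * Num.sqrt su)).
    by apply: ler_sum => l _; rewrite (ord1 z); apply: ler_pM; rewrite ?qnorm_ge0.
  by rewrite sumr_const card_ord -mulr_natl le_eqVlt; apply/orP; left; apply/eqP; ring.
have sum_le K : \sum_(k < K) r%:R * c * Num.sqrt su * Prate x ^+ k <=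
    r%:R * c * Num.sqrt su * (1 - Prate x)^-1.
  by rewrite -mulr_sumr ler_wpM2l ?mulr_ge0 ?sqrtr_ge0 ?ler0n // sum_geometric_le // s0.
have [hV _] := abs_mxseries_cvg term_le sum_le.
exists (mxseries_lim (fun n => odotB A B C D x n *m u n)); split => //.
rewrite mx_sum_toE; apply: (@mxcvg_ext _ _ _ (fun K => \sum_(k < K) odotB A B C D x k *m u k -
    CA_tail A C x K *m state K)); first by move=> K; rewrite Pm_output_sum.
have := mxcvgB hV (mxcvgM (CA_tail_cvg0 hU hx) state_cvg0).
by rewrite mul0mx subr0.
Qed.

End Isometry.

Theorem mainTheorem18 (R : realType) (N r : nat)
  (A : 'M[quat R]_N) (B : 'M[quat R]_(N, r))
  (C : 'M[quat R]_(r, N)) (D : 'M[quat R]_r) :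
  unitary (block_mx A B C D) ->
  (* M_B is an isometry of (H_2(E))^r into itself *)
  (forall u : nat -> 'cV[quat R]_r, in_H2 u ->
     exists w : nat -> 'cV[quat R]_r,
       (exists s : R, H2_norm2_to u s /\ H2_norm2_to w s) /\
       forall x : quat R, in_ellip x ->
         exists (F : nat -> 'M[quat R]_r) (v : 'cV[quat R]_r),
           [/\ forall n, PodotB_to A B C D n x (F n),
               mx_sum_to (fun n => F n *m u n) v &
               mx_sum_to (fun k => Pm k x *: w k) v]) /\
  (* the kernel K_B is well defined on E x E *)
  (forall x y : quat R, in_ellip x -> in_ellip y -> exists K, KB_to A B C D x y K) /\
  (* H(B) is finite dimensional: all kernel sections K_B(., y) c lie in a
     finitely generated right H-module of functions on E *)
  (exists (m : nat) (g : 'I_m -> quat R -> 'cV[quat R]_r),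
     forall (y : quat R) (c : 'cV[quat R]_r), in_ellip y ->
       exists q : 'I_m -> quat R,
         forall (x : quat R) (K : 'M[quat R]_r), in_ellip x -> KB_to A B C D x y K ->
           K *m c = \sum_(i < m) g i x *m (q i)%:M).
Proof.
move=> hU; split; [|split].
- move=> u [su /H2_norm2_toP hu]; exists (output A B C D u).
  split; first by exists su; split; [exact/H2_norm2_toP | exact: output_H2].
  move=> x hx; have [v [hF hw]] := MB_at_point hU hu hx.
  by exists (odotB A B C D x), v; split=> // n; apply: odotB_sum.
- by move=> x y hx hy; exists (CA_tail A C x 0 *m mxadj (CA_tail A C y 0));
    apply: KB_to_CA_tail.
- exists N, (fun i z => col i (CA_tail A C z 0)) => y c hy.
  exists (fun i => (mxadj (CA_tail A C y 0) *m c) i 0) => x K hx hK.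
  rewrite (KB_to_unique hK (KB_to_CA_tail hU hx hy)) -mulmxA.
  exact: mulmx_col_sum.
Qed.
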